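(* Let $S\subseteq(0;1)$ be analytic. (a) $\widehat{\mathrm{Rng}}(\subseteq S)$ and $\widehat{\mathrm{Rng}}(\supseteq S)$ are $\boldsymbol{\Pi}^1_2$ subsets of $\mathrm{MALG}$. (b) If $S$ is Borel then $\widehat{\mathrm{Rng}}(\subseteq S)$ is $\boldsymbol{\Pi}^1_1$. (c) If $S$ is countable then $\widehat{\mathrm{Rng}}(\supseteq S)$ is $\boldsymbol{\Sigma}^1_1$.
   Context: $2^{\omega}$ is the Cantor space; $N_s=\{x\in2^\omega:s\subset x\}$; $\mu$ is the coin-tossing measure, $\mu(N_s)=2^{-\mathrm{lh}(s)}$. $\mathrm{MALG}$ is the measure algebra of Borel subsets of $2^\omega$ modulo null sets, a Polish space with metric $\delta([A],[B])=\mu(A\triangle B)$. For measurable $A$, $\mathcal{D}_A(z)=\lim_n\mu(A\cap N_{z\restriction n})/\mu(N_{z\restriction n})$ when it exists; $\operatorname{ran}\mathcal{D}_A$ is the set of values attained where defined (it depends only on $[A]$). $\widehat{\mathrm{Rng}}(\subseteq S)=\{[A]\in\mathrm{MALG}:\operatorname{ran}\mathcal{D}_A\subseteq S\cup\{0,1\}\}$ and $\widehat{\mathrm{Rng}}(\supseteq S)=\{[A]\in\mathrm{MALG}:S\subseteq\operatorname{ran}\mathcal{D}_A\}$. *)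

From HB Require Import structures.
From mathcomp Require Import all_boot all_order all_algebra.
From mathcomp Require Import all_classical all_reals all_analysis.
Set Implicit Arguments. Unset Strict Implicit. Unset Printing Implicit Defensive.
Import Order.TTheory GRing.Theory Num.Theory numFieldNormedType.Exports.
Local Open Scope classical_set_scope.
Local Open Scope ring_scope.

Definition cantor := nat -> bool.

Definition cyl (s : seq bool) : set cantor :=
  [set x | forall i, (i < size s)%N -> x i = nth false s i].

(* the clopen basis of cylinders; it generates the Borel sigma-algebra *)
Definition cylinders : set (set cantor) := [set N | exists s, N = cyl s].

Definition cantorB := g_sigma_algebraType cylinders.

Definition restr (x : cantor) (n : nat) : seq bool := mkseq x n.

(* mu is the coin-tossing measure: mu(N_s) = 2^{-lh s} (this determines mu) *)
Definition coin_tossing (R : realType) (mu : set cantorB -> \bar R) :=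
  forall s : seq bool, mu (cyl s) = ((2%:R : R) ^- size s)%:E.

Definition symdiff {T} (A B : set T) : set T := (A `\` B) `|` (B `\` A).

(* mu(A ∩ N_{z|n}) / mu(N_{z|n}) = 2^n mu(A ∩ N_{z|n}) *)
Definition dens_seq (R : realType) (mu : set cantorB -> \bar R)
    (A : set cantorB) (z : cantor) (n : nat) : R :=
  fine (mu (A `&` cyl (restr z n))) / ((2%:R : R) ^- n).

Definition ranD (R : realType) (mu : set cantorB -> \bar R) (A : set cantorB)
  : set R := [set r : R | exists z : cantor, (dens_seq mu A z : R^nat) @ \oo --> (r : R)].

(* Rng^(⊆ S) and Rng^(⊇ S), as sets of (Borel) representatives of MALG *)
Definition RngSub (R : realType) (mu : set cantorB -> \bar R) (S : set R)
  : set (set cantorB) :=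
  [set A | measurable A /\ ranD mu A `<=` S `|` [set 0; 1]].
Definition RngSup (R : realType) (mu : set cantorB -> \bar R) (S : set R)
  : set (set cantorB) :=
  [set A | measurable A /\ S `<=` ranD mu A].

(* A (pseudo)metrizable space is given by a carrier set P ⊆ T and its
   notion of sequential convergence conv.  Baire space ω^ω = nat -> nat
   with the product of discrete topologies. *)
Definition baire := nat -> nat.
Definition baire_conv (y : nat -> baire) (x : baire) : Prop :=
  forall i, exists K, forall k, (K <= k)%N -> y k i = x i.

Definition closed1 {T} (P : set T) (conv : (nat -> T) -> T -> Prop)
    (F : set (T * baire)) : Prop :=
  (forall p, F p -> P p.1) /\
  forall (a : nat -> T) (y : nat -> baire) (b : T) (x : baire),
    (forall k, F (a k, y k)) -> P b -> conv a b -> baire_conv y x -> F (b, x).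

Definition closed2 {T} (P : set T) (conv : (nat -> T) -> T -> Prop)
    (F : set (T * baire * baire)) : Prop :=
  (forall p, F p -> P p.1.1) /\
  forall (a : nat -> T) (y z : nat -> baire) (b : T) (x w : baire),
    (forall k, F (a k, y k, z k)) -> P b -> conv a b ->
    baire_conv y x -> baire_conv z w -> F (b, x, w).

Definition Sigma11 {T} (P : set T) conv (X : set T) : Prop :=
  exists F, closed1 P conv F /\ X = [set a | P a /\ exists y, F (a, y)].
Definition Pi11 {T} (P : set T) conv (X : set T) : Prop :=
  X `<=` P /\ Sigma11 P conv (P `\` X).
(* Σ^1_2: projections of Π^1_1 subsets of P × ω^ω; a Π^1_1 subset of
   P × ω^ω is {(a,y) | ∀ z, (a,y,z) ∉ F} with F ⊆ P × ω^ω × ω^ω closed *)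
Definition Sigma12 {T} (P : set T) conv (X : set T) : Prop :=
  exists F, closed2 P conv F /\
    X = [set a | P a /\ exists y, forall z, ~ F (a, y, z)].
Definition Pi12 {T} (P : set T) conv (X : set T) : Prop :=
  X `<=` P /\ Sigma12 P conv (P `\` X).

(* MALG: Borel sets modulo null sets, metric delta(A,B) = mu(A △ B) *)
Definition malg_conv (R : realType) (mu : set cantorB -> \bar R)
    (A : nat -> set cantorB) (B : set cantorB) : Prop :=
  (fun k => mu (symdiff (A k) B)) @ \oo --> 0%E.

Definition real_conv (R : realType) (u : nat -> R) (x : R) : Prop :=
  u @ \oo --> x.

Definition analytic (R : realType) (S : set R) : Prop :=
  Sigma11 setT (@real_conv R) S.

From HB Require Import structures.
From mathcomp Require Import all_boot all_order all_algebra.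
From mathcomp Require Import all_classical all_reals all_analysis.
From mathcomp Require Import ring lra zify.
From Stdlib Require Import Cantor.
Import Order.TTheory GRing.Theory Num.Theory numFieldNormedType.Exports.
Local Open Scope classical_set_scope.
Local Open Scope ring_scope.
Set Implicit Arguments. Unset Strict Implicit. Unset Printing Implicit Defensive.

(* A value [r] of [ran D_A] is witnessed by a point [z] together with a rate of
   convergence of the densities at [z] to [r]; as the [n]-th density depends
   continuously on [[A]] and only on [z|n], "the densities at [z] converge to [r]
   at this rate" is a closed condition on [(A, r, witness)].  Likewise, a real
   sequence given by continuous functions of a code is Cauchy with a coded modulus
   on a closed set of codes, its failure to be so is witnessed by four integers,
   and on the closed set its limit depends continuously on the code.  With the
   analytic set [S] the projection of a closed [F], "[r] in [S]" is an existential
   and "[r] not in [S]" a universal quantifier over Baire space: this gives the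
   Pi^1_2 bounds.  For Borel [S] the complement of [S] is itself analytic, which
   removes the universal quantifier, and for countable [S] the quantifier over
   [r] in [S] becomes a countable conjunction of closed conditions. *)

Section unit_frac.
Variable R : archiRealFieldType.

Definition unit_frac (k : nat) : R := k.+1%:R^-1.

Lemma unit_frac_gt0 k : 0 < unit_frac k.
Proof. by rewrite invr_gt0 ltr0n. Qed.

Lemma unit_frac_le k m : (k <= m)%N -> unit_frac m <= unit_frac k.
Proof. by move=> km; rewrite lef_pV2 ?posrE ?ltr0n // ler_nat ltnS. Qed.

Lemma unit_frac_small e : 0 < e -> exists k, unit_frac k <= e.
Proof.
move=> e0; exists (Num.bound e^-1).
have /archi_boundP e_lt : 0 <= e^-1 by rewrite invr_ge0 ltW.
rewrite -[leRHS]invrK lef_pV2 ?posrE ?invr_gt0 ?ltr0n //.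
by rewrite (le_trans (ltW e_lt)) // ler_nat.
Qed.

Lemma unit_frac_half k : unit_frac k.*2.+1 + unit_frac k.*2.+1 = unit_frac k.
Proof.
rewrite /unit_frac; have -> : k.*2.+2 = (k.+1 * 2)%N by lia.
rewrite natrM.
by field; rewrite ?pnatr_eq0 // -natr1 pnatr_eq0.
Qed.

Lemma exp2_le_unit_frac n : 2%:R ^- n <= unit_frac n.
Proof.
rewrite lef_pV2 ?posrE ?exprn_gt0 ?ltr0n // -natrX ler_nat.
by elim: n => // n IHn; rewrite expnS; lia.
Qed.

End unit_frac.

Section rates.
Variable R : realType.
Implicit Types (u v : nat -> R) (N : nat -> nat).

Definition cvg_at_rate u r N :=
  forall k n, (N k <= n)%N -> `|u n - r| <= unit_frac R k.

Definition cauchy_at_rate u N :=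
  forall k n m, (N k <= n)%N -> (N k <= m)%N -> `|u n - u m| <= unit_frac R k.

Lemma cvg_at_rate_cvg u r N : cvg_at_rate u r N -> u @ \oo --> r.
Proof.
move=> ur; apply/cvgrPdist_le => e e0; have [k ke] := unit_frac_small e0.
by exists (N k) => // n /= kn; rewrite distrC (le_trans (ur _ _ kn)).
Qed.

Lemma cvg_ex_rate u r : u @ \oo --> r -> exists N, cvg_at_rate u r N.
Proof.
move=> /cvgrPdist_le ur.
suff /choice[N uN] : forall k, exists K, forall n, (K <= n)%N -> `|u n - r| <= unit_frac R k.
  by exists N.
move=> k; have [K _ uK] := ur _ (unit_frac_gt0 R k).
by exists K => n /uK; rewrite distrC.
Qed.

Lemma ler_lim_dist u v r t c : u @ \oo --> r -> v @ \oo --> t ->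
  (\forall k \near \oo, `|u k - v k| <= c) -> `|r - t| <= c.
Proof. by move=> ur vt; apply: ler_cvg_to (cvg_cst c); apply: cvg_norm; apply: cvgB. Qed.

Lemma ger_lim_dist u v r t c : u @ \oo --> r -> v @ \oo --> t ->
  (\forall k \near \oo, c <= `|u k - v k|) -> c <= `|r - t|.
Proof. by move=> ur vt; apply: ler_cvg_to (cvg_cst c) _; apply: cvg_norm; apply: cvgB. Qed.

Lemma cauchy_at_rate_lim u N : cauchy_at_rate u N -> cvg_at_rate u (lim (u @ \oo)) N.
Proof.
move=> uN.
have u_cvg : cvg (u @ \oo).
  apply/cauchy_cvgP/cauchy_exP => e e0.
  have [k ke] : exists k, unit_frac R k <= e / 2 by apply: unit_frac_small; lra.
  exists (u (N k)); exists (N k) => // n /= kn.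
  by rewrite /ball /= distrC (le_lt_trans (uN _ _ _ kn (leqnn _))) // (le_lt_trans ke); lra.
move=> k n kn; apply: ler_lim_dist (cvg_cst (u n)) u_cvg _.
by exists (N k) => // m /= km; apply: uN.
Qed.

Lemma cvg_at_half_rate u r N :
  (forall k n, (N k <= n)%N -> `|u n - r| <= unit_frac R k.*2.+1) ->
  cauchy_at_rate u N /\ u @ \oo --> r.
Proof.
move=> ur; split.
  move=> k n m kn km; rewrite -unit_frac_half.
  have := ur _ _ kn; have := ur _ _ km; rewrite distrC => um un.
  by rewrite (le_trans (ler_distD r _ _)) // lerD.
apply: (@cvg_at_rate_cvg _ _ (fun k => N k.*2.+1)) => k n kn.
by rewrite (le_trans (ur _ _ kn)) // unit_frac_le //; lia.
Qed.

End rates.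

Definition btl (y : baire) : baire := fun i => y i.+1.
Definition bcons (n : nat) (y : baire) : baire :=
  fun i => if i is i'.+1 then y i' else n.
Definition evens (y : baire) : baire := fun i => y i.*2.
Definition odds (y : baire) : baire := fun i => y i.*2.+1.
Definition interleave (y1 y2 : baire) : baire :=
  fun i => if odd i then y2 i./2 else y1 i./2.
Definition column (i : nat) (y : baire) : baire := fun j => y (Cantor.to_nat (i, j)).
Definition of_columns (ys : nat -> baire) : baire :=
  fun n => ys (Cantor.of_nat n).1 (Cantor.of_nat n).2.
Definition bits (z : cantor) : baire := fun i => z i.
Definition cantor_of (y : baire) : cantor := fun i => y i != 0%N.

Lemma evens_interleave y1 y2 : evens (interleave y1 y2) = y1.
Proof. by apply: funext => i; rewrite /evens /interleave odd_double doubleK. Qed.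

Lemma odds_interleave y1 y2 : odds (interleave y1 y2) = y2.
Proof. by apply: funext => i; rewrite /odds /interleave /= odd_double uphalf_double. Qed.

Lemma column_of_columns i ys : column i (of_columns ys) = ys i.
Proof. by apply: funext => j; rewrite /column /of_columns cancel_of_to. Qed.

Lemma cantor_of_bits z : cantor_of (bits z) = z.
Proof. by apply: funext => i; rewrite /cantor_of /bits; case: (z i). Qed.

Section baire_conv.
Implicit Types (y : nat -> baire) (x : baire).

Lemma baire_conv_at y x i : baire_conv y x -> \forall k \near \oo, y k i = x i.
Proof. by move=> /(_ i) [K yK]; exists K. Qed.

Lemma baire_conv_prefix y x n : baire_conv y x ->
  \forall k \near \oo, forall i, (i < n)%N -> y k i = x i.
Proof.
move=> yx; elim: n => [|n IHn]; first exact: nearW.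
apply: filterS2 IHn (baire_conv_at n yx) => k yk ykn i.
by rewrite ltnS leq_eqVlt => /predU1P[->|/yk].
Qed.

Lemma baire_conv_comp (g : nat -> nat) y x : baire_conv y x ->
  baire_conv (fun k i => y k (g i)) (fun i => x (g i)).
Proof. by move=> yx i; exact: yx. Qed.

Lemma baire_conv_shift y x K : baire_conv y x -> baire_conv (fun k => y (k + K)%N) x.
Proof.
move=> yx i; have [K' yK'] := yx i.
by exists K' => k kK'; apply: yK'; rewrite (leq_trans kK') ?leq_addr.
Qed.

Lemma cantor_of_evens_near y x n : baire_conv y x ->
  \forall k \near \oo, restr (cantor_of (evens (y k))) n = restr (cantor_of (evens x)) n.
Proof.
move=> /(baire_conv_comp double)/(baire_conv_prefix n).
apply: filterS => k yx; apply/eq_in_map => i; rewrite mem_iota => /andP[_ lt_in].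
by rewrite /cantor_of /evens yx.
Qed.

End baire_conv.

Section seq_closed.
Variables (T : Type) (P : set T) (cv : (nat -> T) -> T -> Prop).

(* Membership is only required eventually, so that [case_head] preserves closedness. *)
Definition seq_closed (G : set T) := forall (a : nat -> T) b,
  (forall k, P (a k)) -> (\forall k \near \oo, G (a k)) -> P b -> cv a b -> G b.

Lemma seq_closed_bigcap I (G : I -> set T) :
  (forall i, seq_closed (G i)) -> seq_closed [set p | forall i, G i p].
Proof. by move=> G_cl a b Pa aG Pb ab i; apply: G_cl Pa _ Pb ab; apply: filterS aG. Qed.

End seq_closed.

Definition baire_dom T (P : set T) : set (T * baire) := [set p | P p.1].
Definition baire_prod_conv T (cv : (nat -> T) -> T -> Prop) :
  (nat -> T * baire) -> T * baire -> Prop :=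
  fun a b => cv (fun k => (a k).1) b.1 /\ baire_conv (fun k => (a k).2) b.2.

Lemma seq_closed_closed1 T (P : set T) cv (G : set (T * baire)) :
  seq_closed (baire_dom P) (baire_prod_conv cv) G -> closed1 P cv [set p | P p.1 /\ G p].
Proof.
move=> G_cl; split=> [p [] //|a y b x aG Pb ab yx]; split=> //.
apply: (G_cl (fun k => (a k, y k)) (b, x)) => //; first by move=> k; case: (aG k).
by apply: nearW => k; case: (aG k).
Qed.

Lemma seq_closed_closed2 T (P : set T) cv (G : set (T * baire * baire)) :
  seq_closed (baire_dom (baire_dom P)) (baire_prod_conv (baire_prod_conv cv)) G ->
  closed2 P cv [set p | P p.1.1 /\ G p].
Proof.
move=> G_cl; split=> [p [] //|a y z b x w aG Pb ab yx zw]; split=> //.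
apply: (G_cl (fun k => (a k, y k, z k)) (b, x, w)) => //; first by move=> k; case: (aG k).
by apply: nearW => k; case: (aG k).
Qed.

Lemma seq_closed_split T (P : set T) cv (G : set (T * baire * baire)) :
  seq_closed (baire_dom (baire_dom P)) (baire_prod_conv (baire_prod_conv cv)) G ->
  seq_closed (baire_dom P) (baire_prod_conv cv) [set p | G (p.1, evens p.2, odds p.2)].
Proof.
move=> G_cl a b Pa aG Pb [ab yx].
apply: (G_cl (fun k => ((a k).1, evens (a k).2, odds (a k).2))) => //.
by split; [split|]; [|apply: baire_conv_comp yx|apply: baire_conv_comp yx].
Qed.

Definition case_head T (Gs : nat -> set (T * baire)) : set (T * baire) :=
  [set p | Gs (p.2 0%N) (p.1, btl p.2)].

Lemma seq_closed_case_head T (P : set T) cv (Gs : nat -> set (T * baire)) :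
  (forall i, seq_closed (baire_dom P) (baire_prod_conv cv) (Gs i)) ->
  seq_closed (baire_dom P) (baire_prod_conv cv) (case_head Gs).
Proof.
move=> Gs_cl a b Pa aG Pb [ab yx].
apply: (Gs_cl (b.2 0%N) (fun k => ((a k).1, btl (a k).2)) (b.1, btl b.2)) => //.
- by apply: filterS2 aG (baire_conv_at 0 yx) => k /[swap] <-.
- by split=> //; apply: (baire_conv_comp S yx).
Qed.

Lemma closed1_real_near (R : realType) (F : set (R * baire)) a y b x :
  closed1 setT (@real_conv R) F -> (\forall k \near \oo, F (a k, y k)) ->
  a @ \oo --> b -> baire_conv y x -> F (b, x).
Proof.
move=> [_ F_cl] [K _ aF] ab yx.
apply: (F_cl (fun k => a (k + K)%N) (fun k => y (k + K)%N)) => //.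
- by move=> k; apply: aF; rewrite /= leq_addl.
- by rewrite /real_conv cvg_shiftn.
- exact: baire_conv_shift.
Qed.

Section cauchy_family.
Variables (R : realType) (T : Type) (P : set T) (cv : (nat -> T) -> T -> Prop).
Variables (s : T -> nat -> R) (N : T -> nat -> nat).
Hypothesis s_cont : forall a b, (forall k, P (a k)) -> P b -> cv a b ->
  forall n, (fun k => s (a k) n) @ \oo --> s b n.
Hypothesis N_cont : forall a b, (forall k, P (a k)) -> P b -> cv a b ->
  forall k, \forall j \near \oo, N (a j) k = N b k.

Definition cauchy_at p := cauchy_at_rate (s p) (N p).

Definition limit p := lim (s p @ \oo).

(* The margin [unit_frac (w 3)] makes a violation a closed condition. *)
Definition cauchy_violation (q : T * baire) := let: (p, w) := q in
  [/\ (N p (w 0%N) <= w 1%N)%N, (N p (w 0%N) <= w 2%N)%N &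
      unit_frac R (w 0%N) + unit_frac R (w 3%N) <= `|s p (w 1%N) - s p (w 2%N)|].

Lemma cauchy_at_limit p : cauchy_at p -> cvg_at_rate (s p) (limit p) (N p).
Proof. exact: cauchy_at_rate_lim. Qed.

Lemma cauchy_at_cvg p : cauchy_at p -> s p @ \oo --> limit p.
Proof. by move/cauchy_at_limit/cvg_at_rate_cvg. Qed.

Lemma cvg_at_half_rate_limit p r :
  (forall k n, (N p k <= n)%N -> `|s p n - r| <= unit_frac R k.*2.+1) ->
  cauchy_at p /\ limit p = r.
Proof.
move=> /cvg_at_half_rate[pN pr]; split=> //.
exact: cvg_unique (cauchy_at_cvg pN) pr.
Qed.

Lemma seq_closed_cauchy_at : seq_closed P cv cauchy_at.
Proof.
move=> a b Pa aN Pb ab k n m kn km.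
apply: ler_lim_dist (s_cont Pa Pb ab (n := n)) (s_cont Pa Pb ab (n := m)) _.
by apply: filterS2 aN (N_cont Pa Pb ab k) => j aNj ajb; apply: aNj; rewrite ajb.
Qed.

Lemma limit_cont a b : (forall k, P (a k)) -> P b -> cv a b ->
  (\forall k \near \oo, cauchy_at (a k)) -> cauchy_at b ->
  (fun k => limit (a k)) @ \oo --> limit b.
Proof.
move=> Pa Pb ab aN bN; apply/cvgrPdist_le => e e0.
have [k ke] : exists k, unit_frac R k <= e / 3 by apply: unit_frac_small; lra.
have e3 : 0 < e / 3 by lra.
set n0 := N b k.
have /cvgrPdist_le/(_ _ e3) sn0 := s_cont Pa Pb ab (n := n0).
apply: filterS3 aN (N_cont Pa Pb ab k) sn0 => j ajN ajk sj.
have d1 : `|limit b - s b n0| <= e / 3.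
  by rewrite distrC (le_trans _ ke) // cauchy_at_limit.
have d3 : `|s (a j) n0 - limit (a j)| <= e / 3.
  by rewrite (le_trans _ ke) // cauchy_at_limit // ajk.
have := ler_distD (s b n0) (limit b) (limit (a j)).
have := ler_distD (s (a j) n0) (s b n0) (limit (a j)).
lra.
Qed.

Lemma cauchy_violationP p : (exists w, cauchy_violation (p, w)) <-> ~ cauchy_at p.
Proof.
split=> [[w [n_ge m_ge big]] pN|pN].
  by have := pN _ _ _ n_ge m_ge; have := unit_frac_gt0 R (w 3%N); lra.
apply: contrapT => noW; apply: pN => k n m kn km; rewrite leNgt; apply/negP => gap.
have [j jk] : exists j, unit_frac R j <= `|s p n - s p m| - unit_frac R k.
  by apply: unit_frac_small; lra.
apply: noW; exists (fun i => match i with 0 => k | 1 => n | 2 => m | _ => j end)%N.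
by split=> //=; lra.
Qed.

Lemma seq_closed_cauchy_violation :
  seq_closed (baire_dom P) (baire_prod_conv cv) cauchy_violation.
Proof.
move=> a [b w0] Pa aV Pb [ab /= ww0].
have aV0 : \forall k \near \oo, cauchy_violation ((a k).1, w0).
  by apply: filterS2 aV (baire_conv_prefix 4 ww0) => k; case: (a k) => p w /=
    [n_ge m_ge big] /(_ _ _)/= w_eq; rewrite !w_eq in n_ge m_ge big.
have Pa1 : forall k, P (a k).1 := Pa.
have /filter_ex[k [[n_ge m_ge _] ak]] : \forall k \near \oo,
    cauchy_violation ((a k).1, w0) /\ N (a k).1 (w0 0%N) = N b (w0 0%N).
  by apply/near_andP; split=> //; apply: N_cont Pa1 Pb ab _.
split; rewrite -?ak //.
apply: ger_lim_dist (s_cont Pa1 Pb ab (n := w0 1%N)) (s_cont Pa1 Pb ab (n := w0 2%N)) _.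
by apply: filterS aV0 => j [].
Qed.

Lemma seq_closed_limit_in (F : set (R * baire)) : closed1 setT (@real_conv R) F ->
  seq_closed (baire_dom P) (baire_prod_conv cv) [set q | cauchy_at q.1 /\ F (limit q.1, q.2)].
Proof.
move=> F_cl a b Pa aF Pb [ab yx]; have Pa1 : forall k, P (a k).1 := Pa.
have aN : \forall k \near \oo, cauchy_at (a k).1 by apply: filterS aF => k [].
have bN := seq_closed_cauchy_at Pa1 aN Pb ab.
split=> //; apply: closed1_real_near F_cl _ (limit_cont Pa1 Pb ab aN bN) yx.
by apply: filterS aF => k [].
Qed.

End cauchy_family.

Lemma measurable_cyl s : measurable (cyl s : set cantorB).
Proof. by apply: sub_sigma_algebra; exists s. Qed.

Section coin_tossing_measure.
Variables (R : realType) (mu : {measure set cantorB -> \bar R}).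
Hypothesis mu_coin : coin_tossing mu.

Lemma coin_tossing_fin_num (A : set cantorB) : measurable A -> mu A \is a fin_num.
Proof.
move=> mA; have cyl_nil : cyl [::] = setT by apply/seteqP; split=> x // _ [].
have : (mu A <= mu (cyl [::]))%E by rewrite le_measure ?inE ?cyl_nil.
by rewrite mu_coin expr0 invr1 => /(le_lt_trans)/(_ (ltry _)); rewrite ge0_fin_numE.
Qed.

Lemma measurable_symdiff (A B : set cantorB) : measurable A -> measurable B ->
  measurable (symdiff A B).
Proof. by move=> mA mB; apply: measurableU; apply: measurableD. Qed.

Lemma measureI_le_symdiff (A B C : set cantorB) :
  measurable A -> measurable B -> measurable C ->
  fine (mu (A `&` C)) <= fine (mu (B `&` C)) + fine (mu (symdiff A B)).
Proof.
move=> mA mB mC; have mAC := measurableI _ _ mA mC; have mBC := measurableI _ _ mB mC.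
have mAB := measurable_symdiff mA mB.
rewrite -lee_fin EFinD !fineK ?coin_tossing_fin_num //.
rewrite (le_trans _ (measureU2 mu mBC mAB)) // le_measure ?inE //; first exact: measurableU.
by move=> x [Ax Cx]; have [Bx|nBx] := pselect (B x); [left | right; left].
Qed.

Lemma dist_measureI_le (A B C : set cantorB) :
  measurable A -> measurable B -> measurable C ->
  `|fine (mu (A `&` C)) - fine (mu (B `&` C))| <= fine (mu (symdiff A B)).
Proof.
move=> mA mB mC; have := measureI_le_symdiff mA mB mC.
have := measureI_le_symdiff mB mA mC; rewrite /symdiff setUC.
by rewrite ler_norml; lra.
Qed.

Lemma dens_seq_cont (A : nat -> set cantorB) B (z : nat -> cantor) z0 n :
  (forall k, measurable (A k)) -> measurable B -> malg_conv mu A B ->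
  (\forall k \near \oo, restr (z k) n = restr z0 n) ->
  (fun k => dens_seq mu (A k) (z k) n) @ \oo --> dens_seq mu B z0 n.
Proof.
move=> mA mB /fine_cvgP[_ /cvgrPdist_le AB] zz0; apply/cvgrPdist_le => e e0.
have c0 : 0 < (2%:R : R) ^- n by rewrite invr_gt0 exprn_gt0 ?ltr0n.
apply: filterS2 zz0 (AB _ (mulr_gt0 e0 c0)) => k zk.
rewrite /dens_seq zk -mulrBl normrM [`|_^-1|]gtr0_norm ?invr_gt0 // ler_pdivrMr //.
move=> dk; rewrite sub0r normrN ger0_norm ?fine_ge0 ?measure_ge0 // in dk.
by apply: le_trans dk; rewrite distrC; apply: dist_measureI_le => //; apply: measurable_cyl.
Qed.

End coin_tossing_measure.

Section dyadic.
Variables (R : realType) (T : Type).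

Definition dyadic (p : T * baire) (n : nat) : R := (evens p.2 n)%:R * 2%:R ^- n.

Definition dyadic_modulus (p : T * baire) (k : nat) := k.*2.+1.

Lemma dyadic_cont cv a b : baire_prod_conv cv a b ->
  forall n, (fun k => dyadic (a k) n) @ \oo --> dyadic b n.
Proof.
move=> [_ ab] n; apply: cvg_near_cst.
by apply: filterS (baire_conv_at n.*2 ab) => k; rewrite /dyadic /evens => ->.
Qed.

Lemma truncn_dyadic_approx (r : R) n : 0 <= r ->
  `|(Num.truncn (r * 2%:R ^+ n))%:R * 2%:R ^- n - r| <= 2%:R ^- n.
Proof.
move=> r0; have c0 : 0 < (2%:R : R) ^+ n by rewrite exprn_gt0 ?ltr0n.
have /andP[t_le t_gt] := truncn_itv (mulr_ge0 r0 (ltW c0)).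
set t := (Num.truncn _)%:R in t_le t_gt *; rewrite -natr1 in t_gt.
have lo : t / 2%:R ^+ n <= r by rewrite ler_pdivrMr.
have hi : r - 2%:R ^- n < t / 2%:R ^+ n.
  by rewrite ltr_pdivlMr // mulrBl mulVf ?gt_eqF //; lra.
by rewrite ler_norml; apply/andP; split; lra.
Qed.

Lemma dyadic_code_exists (r : R) (x : T) (v : baire) : 0 <= r ->
  exists d, cauchy_at dyadic dyadic_modulus (x, interleave d v) /\
            limit dyadic (x, interleave d v) = r.
Proof.
move=> r0; exists (fun n => Num.truncn (r * 2%:R ^+ n)).
apply: cvg_at_half_rate_limit => k n kn.
rewrite /dyadic evens_interleave (le_trans (truncn_dyadic_approx n r0)) //.
by rewrite (le_trans (exp2_le_unit_frac _ n)) // unit_frac_le.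
Qed.

End dyadic.

Section density_codes.
Variables (R : realType) (mu : {measure set cantorB -> \bar R}).
Hypothesis mu_coin : coin_tossing mu.

Definition code_dom : set (set cantorB * baire) := baire_dom measurable.

Definition code_conv : (nat -> set cantorB * baire) -> set cantorB * baire -> Prop :=
  baire_prod_conv (malg_conv mu).

Definition density_code (p : set cantorB * baire) (n : nat) : R :=
  dens_seq mu p.1 (cantor_of (evens p.2)) n.

Definition density_modulus (p : set cantorB * baire) : nat -> nat := odds p.2.

Lemma density_code_cont a b : (forall k, code_dom (a k)) -> code_dom b -> code_conv a b ->
  forall n, (fun k => density_code (a k) n) @ \oo --> density_code b n.
Proof. by move=> Pa Pb [ab yx] n; apply: dens_seq_cont => //; apply: cantor_of_evens_near. Qed.

Lemma density_modulus_cont a b : (forall k, code_dom (a k)) -> code_dom b -> code_conv a b ->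
  forall k, \forall j \near \oo, density_modulus (a j) k = density_modulus b k.
Proof. by move=> _ _ [_ yx] k; apply: baire_conv_at (baire_conv_comp _ yx). Qed.

Definition density_witness (A : set cantorB) (r : R) (u : baire) :=
  cvg_at_rate (dens_seq mu A (cantor_of (evens u))) r (odds u).

Lemma ranD_witnessP A r : ranD mu A r <-> exists u, density_witness A r u.
Proof.
split=> [[z zr]|[u ur]]; last by exists (cantor_of (evens u)); apply: cvg_at_rate_cvg ur.
have [N zN] := cvg_ex_rate zr; exists (interleave (bits z) N).
by rewrite /density_witness evens_interleave odds_interleave cantor_of_bits.
Qed.

Lemma density_witness_closed (A : nat -> set cantorB) B r r0 u u0 :
  (forall k, measurable (A k)) -> measurable B -> malg_conv mu A B ->
  r @ \oo --> r0 -> baire_conv u u0 ->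
  (\forall k \near \oo, density_witness (A k) (r k) (u k)) -> density_witness B r0 u0.
Proof.
move=> mA mB AB rr0 uu0 Aw k n kn.
apply: ler_lim_dist (dens_seq_cont mu_coin mA mB AB (cantor_of_evens_near n uu0)) rr0 _.
apply: filterS2 Aw (baire_conv_at k.*2.+1 uu0) => j Ajw ujk.
by apply: Ajw; rewrite /odds ujk.
Qed.

Lemma cauchy_density_code_ranD A y :
  cauchy_at density_code density_modulus (A, y) -> ranD mu A (limit density_code (A, y)).
Proof. by move=> yN; exists (cantor_of (evens y)); apply: cauchy_at_cvg yN. Qed.

(* Slowing the rate to [k |-> odds u k.*2.+1] turns it into a Cauchy modulus. *)
Lemma density_witness_cauchy A r u : density_witness A r u ->
  exists y, cauchy_at density_code density_modulus (A, y) /\ limit density_code (A, y) = r.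
Proof.
move=> Aw; exists (interleave (evens u) (fun k => odds u k.*2.+1)).
apply: cvg_at_half_rate_limit => k n.
by rewrite /density_code /density_modulus evens_interleave odds_interleave; apply: Aw.
Qed.

End density_codes.

Section real_analytic.
Variable R : realType.
Implicit Types (F : set (R * baire)) (A : set R).

Lemma closed1_fst A : closed A -> closed1 setT (@real_conv R) [set p | A p.1].
Proof.
by move=> A_cl; split=> // a y b x aA _ ab _; apply: closed_cvg A_cl _ b ab; apply: nearW.
Qed.

Lemma analytic_closed A : closed A -> analytic A.
Proof.
move=> A_cl; exists [set p | A p.1]; split; first exact: closed1_fst.
by apply/seteqP; split=> [x Ax|x [_ [_ Ax]]] //; split=> //; exists (fun=> 0%N).
Qed.

Lemma analytic_bigcup (A : nat -> set R) : (forall i, analytic (A i)) -> analytic (\bigcup_i A i).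
Proof.
move=> /choice[F AF]; exists [set p | F (p.2 0%N) (p.1, btl p.2)]; split.
  split=> // a y b x aF _ ab yx.
  apply: closed1_real_near (AF (x 0%N)).1 _ ab (baire_conv_comp S yx).
  by apply: filterS (baire_conv_at 0 yx) => k <-; apply: aF.
apply/seteqP; split=> [r [i _]|r [_ [y Fy]]].
  by rewrite (AF i).2 => -[_ [v Fv]]; split=> //; exists (bcons i v).
by exists (y 0%N) => //; rewrite (AF (y 0%N)).2; split=> //; exists (btl y).
Qed.

Lemma analytic_bigcap (A : nat -> set R) : (forall i, analytic (A i)) -> analytic (\bigcap_i A i).
Proof.
move=> /choice[F AF]; exists [set p | forall i, F i (p.1, column i p.2)]; split.
  split=> // a y b x aF _ ab yx i.
  exact: (AF i).1.2 _ (fun k => column i (y k)) _ _ (fun k => aF k i) I ab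
    (baire_conv_comp _ yx).
apply/seteqP; split=> [r rA|r [_ [y Fy]] i _].
  have /choice[v Fv] : forall i, exists v, F i (r, v).
    by move=> i; have := rA i I; rewrite (AF i).2 => -[_].
  by split=> //; exists (of_columns v) => i; rewrite column_of_columns.
by rewrite (AF i).2; split=> //; exists (column i y).
Qed.

Lemma analytic_itvoc (a b : R) : analytic `]a, b]%classic /\ analytic (~` `]a, b]%classic).
Proof.
split.
  have -> : `]a, b]%classic = \bigcup_m ([set x | a + unit_frac R m <= x] `&` [set x | x <= b]).
    apply/seteqP; split=> x /=; rewrite in_itv /=.
      move=> /andP[ax xb].
      have [m mx] : exists m, unit_frac R m <= x - a by apply: unit_frac_small; lra.
      by exists m => //; split=> /=; lra.
    by move=> [m _ [/= amx ->]]; rewrite andbT; have := unit_frac_gt0 R m; lra.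
  apply: analytic_bigcup => m; apply: analytic_closed.
  by apply: closedI; [apply: closed_ge | apply: closed_le].
have -> : ~` `]a, b]%classic = \bigcup_m ([set x | x <= a] `|` [set x | b + unit_frac R m <= x]).
  apply/seteqP; split=> x /=; rewrite in_itv /=.
    move=> /negP; rewrite negb_and -leNgt -ltNge => /orP[xa|bx]; first by exists 0%N => //; left.
    have [m mx] : exists m, unit_frac R m <= x - b by apply: unit_frac_small; lra.
    by exists m => //; right => /=; lra.
  by move=> [m _ /= mx] /andP[ax xb]; have := unit_frac_gt0 R m; case: mx => /=; lra.
apply: analytic_bigcup => m; apply: analytic_closed.
by apply: closedU; [apply: closed_le | apply: closed_ge].
Qed.

Lemma analytic_borel A : measurable A -> analytic A.
Proof.
have analytic0 : analytic (set0 : set R) /\ analytic (~` set0 : set R).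
  by rewrite setC0; split; apply: analytic_closed; [exact: closed0 | exact: closedT].
move=> mA; suff : [set X | analytic X /\ analytic (~` X)] A by case.
apply: mA; split.
- split=> // [X [XA XcA]|X XA]; first by rewrite /= setTD setCK.
  rewrite /= setC_bigcup; split.
    by apply: analytic_bigcup => i; case: (XA i).
  by apply: analytic_bigcap => i; case: (XA i).
- by move=> X /ocitvP[->|[[a b] /= _ ->]] //; apply: analytic_itvoc.
Qed.

Definition apart F (m : nat) (p : R * baire) :=
  forall q, F q -> unit_frac R m <= `|q.1 - p.1| \/ exists2 i, (i < m)%N & q.2 i <> p.2 i.

Lemma apart_notin F m p : apart F m p -> ~ F p.
Proof.
move=> Fm Fp; case: (Fm p Fp) => [|[i _ //]].
by rewrite subrr normr0; have := unit_frac_gt0 R m; lra.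
Qed.

Lemma closed1_apart F m : closed1 setT (@real_conv R) [set p | apart F m p].
Proof.
split=> // a y b x aF _ ab yx q Fq.
have [|qx] := pselect (exists2 i, (i < m)%N & q.2 i <> x i); [by right | left].
apply: ger_lim_dist (cvg_cst q.1) ab _.
apply: filterS (baire_conv_prefix m yx) => k yk.
case: (aF k q Fq) => // -[i im qy]; exfalso; apply: qx; exists i => //.
by rewrite -(yk i im).
Qed.

Lemma ex_apart F p : closed1 setT (@real_conv R) F -> ~ F p -> exists m, apart F m p.
Proof.
move=> F_cl Fp; apply: contrapT => not_apart; apply: Fp.
have /choice[q qP] : forall m, exists q, F q /\ `|q.1 - p.1| < unit_frac R m /\
    forall i, (i < m)%N -> q.2 i = p.2 i.
  move=> m; apply: contrapT => noq; apply: not_apart; exists m => q Fq.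
  have [qp|qp] := pselect (forall i, (i < m)%N -> q.2 i = p.2 i); last first.
    right; apply: contrapT => nq; apply: qp => i im.
    by apply: contrapT => nqi; apply: nq; exists i.
  by left; rewrite leNgt; apply/negP => lt; apply: noq; exists q.
case: p => r v in not_apart qP *.
apply: (closed1_real_near (a := fun m => (q m).1) (y := fun m => (q m).2) F_cl).
- by apply: nearW => m; rewrite -surjective_pairing; case: (qP m).
- apply/cvgrPdist_le => e e0; have [k ke] := unit_frac_small e0.
  exists k => // m /= km; case: (qP m) => _ [qm _]; rewrite distrC.
  by apply/ltW/(lt_le_trans qm); apply: le_trans (unit_frac_le _ km) ke.
- by move=> i; exists i.+1 => m im; case: (qP m) => _ [_ ->].
Qed.

End real_analytic.

Section malg_complexity.
Variables (R : realType) (mu : {measure set cantorB -> \bar R}).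
Hypothesis mu_coin : coin_tossing mu.

Local Notation code_closed :=
  (seq_closed (baire_dom code_dom) (baire_prod_conv (code_conv mu))).
Local Notation density_cauchy := (cauchy_at (density_code mu) density_modulus).
Local Notation density_limit := (limit (density_code mu)).
Local Notation dyadic_cauchy :=
  (cauchy_at (@dyadic R (set cantorB)) (@dyadic_modulus (set cantorB))).
Local Notation dyadic_limit := (limit (@dyadic R (set cantorB))).

Let density_cont := @density_code_cont R mu mu_coin.
Let density_mod_cont := @density_modulus_cont R mu.

Let dyadic_code_cont a b (_ : forall k, code_dom (a k)) (_ : code_dom b)
  (ab : code_conv mu a b) := @dyadic_cont R (set cantorB) _ a b ab.

Let dyadic_modulus_cont a b (_ : forall k, code_dom (a k)) (_ : code_dom b)
    (_ : code_conv mu a b) (k : nat) :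
  \forall j \near \oo, dyadic_modulus (a j) k = dyadic_modulus b k :=
  nearW _ (fun=> erefl).

Lemma RngSubPn S A : measurable A -> ~ RngSub mu S A ->
  exists r, ranD mu A r /\ ~ (S `|` [set 0; 1]) r.
Proof.
move=> mA notSub; apply: contrapT => noR; apply: notSub; split=> // r Ar.
by apply: contrapT => rS; apply: noR; exists r.
Qed.

Definition rng_sub_target (F : set (R * baire)) (i : nat) : set (R * baire) :=
  match i with 0 => F | 1 => [set p | p.1 = 0] | _ => [set p | p.1 = 1] end.

Lemma rng_sub_targetP F (S : set R) r : S = [set r | setT r /\ exists v, F (r, v)] ->
  (S `|` [set 0; 1]) r <-> exists i v, rng_sub_target F i (r, v).
Proof.
move=> ->; split=> [[[_ [v Fv]]|[->|->]]|[[|[|i]] [v /= tv]]].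
- by exists 0%N, v.
- by exists 1%N, (fun=> 0%N); rewrite /=.
- by exists 2%N, (fun=> 0%N); rewrite /=.
- by left; split=> //; exists v.
- by right; left.
- by right; right.
Qed.

(* [A] is outside [RngSub mu S] iff some density code [(A, y)] has no witness [w],
   read off by its first digit, of a failure to converge or of a limit in [S]
   (with [S] the projection of [F]), [0] or [1]. *)
Definition rng_sub_test (F : set (R * baire)) (i : nat) : set (set cantorB * baire * baire) :=
  if i is i'.+1 then [set q | density_cauchy q.1 /\ rng_sub_target F i' (density_limit q.1, q.2)]
  else cauchy_violation (density_code mu) density_modulus.

Lemma code_closed_rng_sub_test F i : closed1 setT (@real_conv R) F ->
  code_closed (rng_sub_test F i).
Proof.
move=> F_cl; case: i => [|i].
  exact: seq_closed_cauchy_violation density_cont density_mod_cont.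
have target_cl : closed1 setT (@real_conv R) (rng_sub_target F i).
  case: i => [|[|i]] //.
    by apply: (@closed1_fst _ [set x | x = 0]); apply: closed_eq.
  by apply: (@closed1_fst _ [set x | x = 1]); apply: closed_eq.
exact: (@seq_closed_limit_in _ _ _ _ _ _ density_cont density_mod_cont _ target_cl).
Qed.

Lemma Pi12_RngSub S : analytic S -> Pi12 measurable (malg_conv mu) (RngSub mu S).
Proof.
move=> [F [F_cl defS]]; split=> [A [] //|].
exists [set p | measurable p.1.1 /\ case_head (rng_sub_test F) p]; split.
  by apply: seq_closed_closed2; apply: seq_closed_case_head => i; apply: code_closed_rng_sub_test.
apply/seteqP; split=> [A [mA notSub]|A [mA [y yP]]]; split=> //.
  have [r [Ar rS]] := RngSubPn mA notSub.
  have [u /density_witness_cauchy[y [yN yr]]] := (ranD_witnessP mu A r).1 Ar.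
  exists y => w [_]; rewrite /case_head /=; case: (w 0%N) => [|i] /=.
    by move=> wV; move: yN; apply/cauchy_violationP; exists (btl w).
  by move=> [_ ti]; apply: rS; apply/(rng_sub_targetP r defS); exists i, (btl w); rewrite -yr.
move=> [_ Sub].
have yN : density_cauchy (A, y).
  by apply: contrapT => /cauchy_violationP[w wV]; apply: (yP (bcons 0 w)).
have /Sub/(rng_sub_targetP _ defS)[i [v tv]] := cauchy_density_code_ranD yN.
by apply: (yP (bcons i.+1 v)).
Qed.

(* Here [y = interleave d v] names the real [r] with dyadic digits [d], and [A] is
   outside [RngSup mu S] iff for some [y] no [w] witnesses a failure of [d] to
   converge, that [(r, v)] lies outside [F], or that [r] lies in [ran D_A]. *)
Definition rng_sup_test (F : set (R * baire)) (i : nat) : set (set cantorB * baire * baire) :=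
  match i with
  | 0 => cauchy_violation (@dyadic R (set cantorB)) (@dyadic_modulus (set cantorB))
  | 1 => [set q | dyadic_cauchy q.1 /\ apart F (q.2 0%N) (dyadic_limit q.1, odds q.1.2)]
  | _ => [set q | dyadic_cauchy q.1 /\ density_witness mu q.1.1 (dyadic_limit q.1) q.2]
  end.

Lemma code_closed_rng_sup_test F i : code_closed (rng_sup_test F i).
Proof.
case: i => [|[|i]].
  exact: seq_closed_cauchy_violation dyadic_code_cont dyadic_modulus_cont.
all: move=> a b Pa aT Pb [ab wx]; have Pa1 : forall k, code_dom (a k).1 := Pa.
all: have aN : \forall k \near \oo, dyadic_cauchy (a k).1 by apply: filterS aT => k [].
all: have bN := seq_closed_cauchy_at dyadic_code_cont dyadic_modulus_cont Pa1 aN Pb ab.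
all: have lim_cvg := limit_cont dyadic_code_cont dyadic_modulus_cont Pa1 Pb ab aN bN.
all: split=> //.
  apply: closed1_real_near (closed1_apart F (b.2 0%N)) _ lim_cvg (baire_conv_comp _ ab.2).
  by apply: filterS2 aT (baire_conv_at 0 wx) => k [_ ?] <-.
apply: (density_witness_closed mu_coin (A := fun k => (a k).1.1)) Pb ab.1 lim_cvg wx _.
  by move=> k; apply: Pa.
by apply: filterS aT => k [].
Qed.

Lemma Pi12_RngSup S : (forall r, S r -> 0 <= r) -> analytic S ->
  Pi12 measurable (malg_conv mu) (RngSup mu S).
Proof.
move=> S_ge0 [F [F_cl defS]]; split=> [A [] //|].
exists [set p | measurable p.1.1 /\ case_head (rng_sup_test F) p]; split.
  by apply: seq_closed_closed2; apply: seq_closed_case_head => i; apply: code_closed_rng_sup_test.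
apply/seteqP; split=> [A [mA notSup]|A [mA [y yP]]]; split=> //.
  have [r [Sr Ar]] : exists r, S r /\ ~ ranD mu A r.
    apply: contrapT => noR; apply: notSup; split=> // r Sr.
    by apply: contrapT => Ar; apply: noR; exists r.
  have := Sr; rewrite defS => -[_ [v Fv]].
  have [d [yN yr]] := dyadic_code_exists A v (S_ge0 _ Sr).
  exists (interleave d v) => w [_]; rewrite /case_head /=; case: (w 0%N) => [|[|i]] /=.
  - by move=> wV; move: yN; apply/cauchy_violationP; exists (btl w).
  - by move=> [_]; rewrite yr odds_interleave => /apart_notin.
  - by move=> [_ Aw]; apply: Ar; apply/ranD_witnessP; exists (btl w); rewrite -yr.
move=> [_ Sup].
have yN : dyadic_cauchy (A, y).
  by apply: contrapT => /cauchy_violationP[w wV]; apply: (yP (bcons 0 w)).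
have Fr : F (dyadic_limit (A, y), odds y).
  apply: contrapT => /(ex_apart F_cl)[m Fm].
  by apply: (yP (bcons 1 (fun=> m))).
have /Sup/ranD_witnessP[u Au] : S (dyadic_limit (A, y)).
  by rewrite defS; split=> //; exists (odds y).
by apply: (yP (bcons 2 u)).
Qed.

Lemma Pi11_RngSub S : measurable S -> Pi11 measurable (malg_conv mu) (RngSub mu S).
Proof.
move=> mS; split=> [A [] //|].
have /analytic_borel[F [F_cl defC]] : measurable (~` (S `|` [set 0; 1])).
  by apply: measurableC; apply: measurableU => //; apply: measurableU.
exists [set p | measurable p.1 /\
  [set q | density_cauchy q.1 /\ F (density_limit q.1, q.2)] (p.1, evens p.2, odds p.2)].
split.
  apply: seq_closed_closed1; apply: seq_closed_split.
  exact: (@seq_closed_limit_in _ _ _ _ _ _ density_cont density_mod_cont _ F_cl).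
apply/seteqP; split=> [A [mA notSub]|A [mA [y [_ [yN Fy]]]]]; split=> //.
  have [r [Ar rS]] := RngSubPn mA notSub.
  have [u /density_witness_cauchy[y [yN yr]]] := (ranD_witnessP mu A r).1 Ar.
  have : (~` (S `|` [set 0; 1])) r := rS; rewrite defC => -[_ [v Fv]].
  by exists (interleave y v); rewrite /= evens_interleave odds_interleave yr.
move=> [_ Sub]; have : (~` (S `|` [set 0; 1])) (density_limit (A, evens y)).
  by rewrite defC; split=> //; exists (odds y).
by apply; apply/Sub/cauchy_density_code_ranD.
Qed.

Lemma Sigma11_RngSup S : countable S -> Sigma11 measurable (malg_conv mu) (RngSup mu S).
Proof.
move=> /pcard_surjP[g gS].
exists [set p | measurable p.1 /\
  forall i, S (g i) -> density_witness mu p.1 (g i) (column i p.2)]; split.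
  apply: seq_closed_closed1; apply: seq_closed_bigcap => i a b Pa aW Pb [ab yx] Sgi.
  apply: (density_witness_closed mu_coin (A := fun k => (a k).1)) Pb ab (cvg_cst _)
    (baire_conv_comp _ yx) _ => [k|]; first exact: Pa.
  by apply: filterS aW => k /(_ Sgi).
apply/seteqP; split=> [A [mA SA]|A [mA [y [_ Ay]]]]; split=> //.
  suff /choice[u Au] : forall i, exists u, S (g i) -> density_witness mu A (g i) u.
    by exists (of_columns u); split=> // i; rewrite column_of_columns; apply: Au.
  move=> i; have [Sgi|nSgi] := pselect (S (g i)); last by exists (fun=> 0%N) => /nSgi.
  by have [u Au] := (ranD_witnessP mu A (g i)).1 (SA _ Sgi); exists u.
move=> r Sr; have [i _ gi] := gS r Sr; rewrite -gi in Sr *.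
by apply/ranD_witnessP; exists (column i y); apply: Ay.
Qed.

End malg_complexity.

Unset Implicit Arguments.

Theorem lemma3p7 (R : realType) (mu : {measure set cantorB -> \bar R})
  (Hmu : coin_tossing mu) (S : set R) (HS01 : S `<=` `]0, 1[)
  (HS : analytic S) :
  (Pi12 measurable (malg_conv mu) (RngSub mu S) /\
   Pi12 measurable (malg_conv mu) (RngSup mu S)) /\
  (measurable S -> Pi11 measurable (malg_conv mu) (RngSub mu S)) /\
  (countable S -> Sigma11 measurable (malg_conv mu) (RngSup mu S)).
Proof.
have S_ge0 r : S r -> 0 <= r by move=> /HS01; rewrite /= in_itv => /andP[/ltW].
split; first split.
- exact: Pi12_RngSub.
- exact: Pi12_RngSup.
split; [exact: Pi11_RngSub | exact: Sigma11_RngSup].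
Qed.
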